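(* There is a function $q(k)\in\Theta(k^2)$ such that the following holds. Let $G$ be a graph, let $k$ be the number of robots of a CSMP instance on $G$, let $H_w$ be a strong $q(k)$-haven anchored at a vertex $w$, and let $\hat H_w$ be the graph obtained as the union of $H_w$ and three edges of $G$ incident to $w$. Let $S\subseteq\mathcal R$ be a set of robots located on vertices of $H_w$ in configuration $\iota$, and assume no robot outside $S$ is located on a vertex of $\hat H_w$. Then for every configuration $\iota'$ of $S$ with respect to $H_w$, there is a sequence of $O(k^6)$ sliding moves, each along a path of $\hat H_w$, that transforms $\iota$ into $\iota'$.
   Context: Robots and sliding moves: robots occupy pairwise distinct vertices of $G$; a sliding move moves one robot along a simple path of $G$ from its current vertex to another vertex such that no other robot is located on any vertex of that path, all other robots staying put. For a set $S$ of robots and a subgraph $H$ of $G$, a configuration of $S$ with respect to $H$ is an injection $\iota:S\to V(H)$ (the positions of the robots of $S$). The length of a path is its number of edges; for a path $P$ and vertices $u,v$ on it, the $P$-distance between $u$ and $v$ is the length of the subpath of $P$ between $u$ and $v$. Havens: for $q\in\mathbb N$, a vertex $w$ of degree at least three in $G$ lying on a path $P$ of length $q$ is a $q$-anchor, and $P$ is a $q$-haven anchored at $w$. $P$ is a $q$-haven for a vertex $v$ (anchored at $w$) if $v$ lies on $P$ and has $P$-distance at least $\lceil q/3\rceil$ and at most $\lfloor 2q/3\rfloor$ from $w$. $P$ is a strong $q$-haven anchored at $w$ if it is a $q$-haven anchored at $w$ for both endpoints of $P$. *)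

(* Graphs: G is a finite simple graph given by a symmetric,
   irreflexive relation e on a finType V. *)
From mathcomp Require Import all_boot.
Set Implicit Arguments. Unset Strict Implicit. Unset Printing Implicit Defensive.

Definition deg (V : finType) (e : rel V) (v : V) : nat := #|[set u | e v u]|.

(* A simple path of the graph e, as the nonempty duplicate-free sequence of
   its vertices; its length is (size p).-1 (number of edges). *)
Definition is_spath (V : eqType) (e : rel V) (p : seq V) : bool :=
  if p is x :: s then path e x s && uniq p else false.

Definition Pdist (V : eqType) (P : seq V) (u v : V) : nat :=
  (index u P - index v P) + (index v P - index u P).

Definition haven_for (V : finType) (e : rel V) (q : nat) (P : seq V) (w v : V) : bool :=
  [&& is_spath e P, size P == q.+1, w \in P, 3 <= deg e w, v \in P,
      (q + 2) %/ 3 <= Pdist P v w & Pdist P v w <= (2 * q) %/ 3].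

Definition strong_haven (V : finType) (e : rel V) (q : nat) (P : seq V) (w : V) : bool :=
  haven_for e q P w (head w P) && haven_for e q P w (last w P).

Definition adj_in (V : eqType) (P : seq V) (x y : V) : bool :=
  has (fun pr => (pr == (x, y)) || (pr == (y, x))) (zip P (behead P)).

Definition hat_edge (V : eqType) (P : seq V) (w : V) (N : seq V) (x y : V) : bool :=
  [|| adj_in P x y, (x == w) && (y \in N) | (y == w) && (x \in N)].

Definition hat_vert (V : eqType) (P : seq V) (N : seq V) (x : V) : bool :=
  (x \in P) || (x \in N).

Definition slide_move (Rob V : eqType) (h : rel V) (c c' : Rob -> V) : Prop :=
  exists (r : Rob) (p : seq V),
    [/\ is_spath h p, head (c r) p = c r, last (c r) p = c' r, c r != c' r &
        forall r', r' != r -> c' r' = c r' /\ c r' \notin p].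

Fixpoint chain (T : Type) (R : T -> T -> Prop) (x : T) (s : seq T) : Prop :=
  match s with
  | [::] => True
  | y :: s' => R x y /\ chain R y s'
  end.

(* Cutting the haven P at its anchor w gives two legs of length at least q/3.
   At most two of the three neighbours of w are adjacent to w on P; the edge
   from w to a third one, x, turns P into a spider: three disjoint paths A, B,
   C leaving w, with A and B long (for q = 6k^2, at least k vertices each) and
   C nonempty (x splits the leg containing it, or C is x alone).
   On a spider the robots can be parked one at a time at the far end of A, in
   a fixed order. To park r: gather all robots on B, move those between w and
   r onto A, let r escape through w to the first vertex of C, push the others
   back onto B, and slide r along A.
   This costs O(k) moves per robot, so every configuration reaches the parked
   one in O(k^2) moves. Sliding moves are reversible, hence the configurations
   of the robots of S on P are pairwise reachable within O(k^2) <= O(k^6). *)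

From mathcomp Require Import all_boot zify.
From Stdlib Require Import Lia FunctionalExtensionality.
Set Implicit Arguments. Unset Strict Implicit. Unset Printing Implicit Defensive.

Lemma spathE (V : eqType) (h : rel V) p :
  is_spath h p = [&& sorted h p, uniq p & p != [::]].
Proof. by case: p => //= x s; rewrite andbT. Qed.

Lemma sorted_rev_sym (T : Type) (h : rel T) s :
  symmetric h -> sorted h (rev s) = sorted h s.
Proof. by move=> hs; rewrite rev_sorted; apply: eq_sorted => x y; rewrite hs. Qed.

Lemma spath_rev (V : eqType) (h : rel V) p :
  symmetric h -> is_spath h (rev p) = is_spath h p.
Proof. by move=> hs; rewrite !spathE sorted_rev_sym // rev_uniq -!size_eq0 size_rev. Qed.

Section Reach.
Variables (Rob V : eqType) (h : rel V).

Definition reach (c d : Rob -> V) (n : nat) : Prop :=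
  exists cs, [/\ chain (@slide_move Rob V h) c cs, last c cs = d & size cs <= n].

Lemma chain_cat (R : (Rob -> V) -> (Rob -> V) -> Prop) c s1 s2 :
  chain R c s1 -> chain R (last c s1) s2 -> chain R c (s1 ++ s2).
Proof. by elim: s1 c => //= d s IH c [Hcd Hs] Hs2; split => //; apply: IH. Qed.

Lemma reach_refl c n : reach c c n.
Proof. by exists [::]. Qed.

Lemma reach_mono c d n m : n <= m -> reach c d n -> reach c d m.
Proof. by move=> nm [cs [Hch Hl Hs]]; exists cs; split => //; apply: leq_trans nm. Qed.

Lemma reach_trans c d f n m : reach c d n -> reach d f m -> reach c f (n + m).
Proof.
move=> [cs [Hch Hl Hs]] [cs' [Hch' Hl' Hs']]; exists (cs ++ cs'); split.
- by apply: chain_cat; rewrite // Hl.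
- by rewrite last_cat Hl.
- by rewrite size_cat leq_add.
Qed.

Lemma reach_step c d : @slide_move Rob V h c d -> reach c d 1.
Proof. by exists [:: d]. Qed.

Hypothesis hs : symmetric h.

Lemma slide_move_sym c d : @slide_move Rob V h c d -> @slide_move Rob V h d c.
Proof.
move=> [r [[|x s] [Hp Hh Hl Hne Ho]]] //.
exists r, (rev (x :: s)); split.
- by rewrite spath_rev.
- by rewrite -Hl /= lastI rev_rcons.
- by rewrite -Hh rev_cons last_rcons.
- by rewrite eq_sym.
- by move=> r' /Ho [-> Hn]; rewrite mem_rev.
Qed.

Lemma reach_sym c d n : reach c d n -> reach d c n.
Proof.
move=> [cs [Hch <- Hs]]; apply: reach_mono Hs _ => {n}.
elim: cs c Hch => [|e cs IH] c /=; first by move=> _; apply: reach_refl.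
move=> [Hce Hch]; rewrite -addn1; apply: reach_trans (IH _ Hch) _.
by apply/reach_step/slide_move_sym.
Qed.

End Reach.

Definition upd (Rob V : eqType) (c : Rob -> V) (r : Rob) (y : V) : Rob -> V :=
  fun x => if x == r then y else c x.

Section Slide.
Variables (Rob V : eqType) (h : rel V) (c : Rob -> V) (r : Rob) (p : seq V).
Hypotheses (Hp : is_spath h p) (Hhead : head (c r) p = c r)
  (Hfree : forall x, x != r -> c x \notin p).

Lemma reach_slide : reach h c (upd c r (last (c r) p)) 1.
Proof.
case: (eqVneq (c r) (last (c r) p)) => [<-|Hne].
  have -> : upd c r (c r) = c.
    by apply: functional_extensionality => x; rewrite /upd; case: eqP => // ->.
  exact: reach_refl.
apply: reach_step; exists r, p; rewrite /upd eqxx; split => //.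
by move=> x Hx; rewrite (negbTE Hx); split => //; apply: Hfree.
Qed.

Lemma injective_slide : injective c -> injective (upd c r (last (c r) p)).
Proof.
have Hlast : last (c r) p \in p by case: p Hp => //= x s _; apply: mem_last.
have Hy x : x != r -> c x != last (c r) p.
  by move=> /Hfree; apply: contraNneq => ->; exact: Hlast.
move=> Hc a b; rewrite /upd.
case: (eqVneq a r) => [->|Ha]; case: (eqVneq b r) => [->|Hb] //.
- by move=> E; move: (Hy _ Hb); rewrite E eqxx.
- by move=> E; move: (Hy _ Ha); rewrite E eqxx.
- exact: Hc.
Qed.

End Slide.

Lemma index_drop_uniq (V : eqType) (s : seq V) i y :
  uniq s -> y \in drop i s -> i <= index y s.
Proof.
move=> Hu Hy; have Hi : i <= size s.
  by rewrite leqNgt; apply: contraTN Hy => /ltnW Hlt; rewrite drop_oversize.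
move: Hu; rewrite -(cat_take_drop i s) cat_uniq => /and3P[_ /hasPn Hd _].
by rewrite index_cat (negbTE (Hd _ Hy)) size_take_min (minn_idPl Hi) leq_addr.
Qed.

Section Compress.
Variables (Rob : finType) (V : eqType) (h : rel V).

Lemma slide_farthest (Q : seq V) v (c : Rob -> V) r :
  sorted h (rcons Q v) -> uniq (rcons Q v) -> injective c -> c r \in rcons Q v ->
  (forall x, c x \in rcons Q v -> index (c x) (rcons Q v) <= index (c r) (rcons Q v)) ->
  [/\ reach h c (upd c r v) 1, injective (upd c r v) & forall x, x != r -> c x != v].
Proof.
move=> Hs Hu Hc HrQ Hmax; set i := index (c r) (rcons Q v).
have Hi : i <= size Q by rewrite -ltnS -(size_rcons Q v) index_mem.
set p := drop i (rcons Q v).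
have Hp : is_spath h p by rewrite spathE drop_sorted // drop_uniq //= /p drop_index.
have Hhead : head (c r) p = c r by rewrite /p drop_index.
have Hlast : last (c r) p = v by rewrite /p drop_rcons // last_rcons.
have Hfree x : x != r -> c x \notin p.
  apply: contraNN => Hxp; apply/eqP/Hc; have HxQ := mem_drop Hxp.
  have Ei : index (c x) (rcons Q v) = i.
    by apply/eqP; rewrite eqn_leq Hmax //= index_drop_uniq.
  by rewrite -(nth_index (c x) HxQ) -(nth_index (c x) HrQ) Ei.
rewrite -Hlast; split; [exact: reach_slide Hp Hhead Hfree | exact: injective_slide Hp Hfree Hc |].
by move=> x /Hfree; apply: contraNneq => ->; rewrite /p drop_index //= mem_last.
Qed.

Lemma compress_to_end (Q : seq V) (c : Rob -> V) :
  sorted h Q -> uniq Q -> injective c ->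
  exists d, [/\ reach h c d #|[set r | c r \in Q]|, injective d,
     (forall r, c r \notin Q -> d r = c r) &
     (forall r, c r \in Q -> d r \in drop (size Q - #|[set r | c r \in Q]|) Q)].
Proof.
elim/last_ind: Q c => [|Q v IH] c Hs Hu Hc.
  by exists c; split => //; apply: reach_refl.
set T := [set r | c r \in rcons Q v].
have [T0|[r0 Hr0]] := set_0Vmem T.
  exists c; split => //; first exact: reach_refl.
  move=> r Hr; have : r \in T by rewrite inE.
  by rewrite T0 inE.
have [r Hr Hmax] := arg_maxnP (fun x => index (c x) (rcons Q v)) Hr0.
have HrT : r \in T := Hr.
have HrQ : c r \in rcons Q v by rewrite inE in HrT.
have [R1 I1 Hv] : [/\ reach h c (upd c r v) 1, injective (upd c r v) & forall x, x != r -> c x != v].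
  apply: (slide_farthest Hs) => // x Hx.
  have HxT : x \in T by rewrite inE.
  exact: Hmax HxT.
have /andP[HvQ HuQ] : (v \notin Q) && uniq Q by rewrite -rcons_uniq.
have HsQ : sorted h Q by move: Hs; rewrite -cats1 => /cat_sorted2[].
have [d [R2 I2 Hoff Hon]] := IH _ HsQ HuQ I1.
have HT : [set x | upd c r v x \in Q] = T :\ r.
  apply/setP => x; rewrite !inE /upd; case: (eqVneq x r) => [_|Hx] /=; first exact/negbTE.
  by rewrite mem_rcons in_cons (negbTE (Hv _ Hx)).
have HcT : #|T| = (#|T :\ r|).+1 by rewrite (cardsD1 r T) HrT.
rewrite HT in R2 Hon; exists d; split => //.
- by rewrite HcT -add1n; apply: reach_trans R1 R2.
- move=> x Hx; have Hxr : x != r by apply: contraNneq Hx => ->.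
  rewrite Hoff /upd (negbTE Hxr) //.
  by move: Hx; rewrite mem_rcons in_cons negb_or => /andP[].
- move=> x Hx; rewrite HcT size_rcons subSS drop_rcons ?leq_subr // mem_rcons in_cons.
  case: (eqVneq x r) => [->|Hxr].
    by rewrite Hoff /upd eqxx ?eqxx // HvQ.
  apply/orP; right; apply: Hon.
  by move: Hx; rewrite /upd (negbTE Hxr) mem_rcons in_cons (negbTE (Hv _ Hxr)).
Qed.

End Compress.

Section Legs.
Variables (V : eqType) (h : rel V) (w : V).

Definition legs (X Y : seq V) := rev X ++ w :: Y.

Lemma mem_legs X Y y : (y \in legs X Y) = [|| y \in X, y == w | y \in Y].
Proof. by rewrite mem_cat mem_rev in_cons. Qed.

Lemma perm_legs X Y : perm_eq (legs X Y) (w :: X ++ Y).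
Proof.
rewrite /legs -[w :: Y]cat1s -[w :: X ++ Y]cat1s.
by rewrite perm_catCA perm_cat2l perm_cat2r perm_rev.
Qed.

Lemma uniq_legs X Y : uniq (legs X Y) = uniq (w :: X ++ Y).
Proof. exact/perm_uniq/perm_legs. Qed.

Lemma sorted_legs X Y :
  symmetric h -> path h w X -> path h w Y -> sorted h (legs X Y).
Proof. by move=> hs HX HY; rewrite /legs sorted_cat_cons HY andbT -rev_cons sorted_rev_sym. Qed.

Lemma spath_legs X Y :
  symmetric h -> path h w X -> path h w Y -> uniq (w :: X ++ Y) -> is_spath h (legs X Y).
Proof.
by move=> hs HX HY Hu; rewrite spathE sorted_legs // uniq_legs Hu -size_eq0 size_cat addnS.
Qed.

Lemma drop_legs X Y t y :
  t <= size Y -> y \in drop (size (legs X Y) - t) (legs X Y) -> y \in Y.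
Proof.
move=> Ht; rewrite /legs -cat_rcons drop_cat size_cat !size_rcons size_rev.
have -> : (size X).+1 + size Y - t < (size X).+1 = false.
  by apply/negbTE; rewrite -leqNgt -addnBA // leq_addr.
by move/mem_drop.
Qed.

Lemma compress_onto_leg (Rob : finType) X Y (o : seq Rob) (c : Rob -> V) :
  symmetric h -> path h w X -> path h w Y -> uniq (w :: X ++ Y) -> injective c ->
  (forall x, c x \in legs X Y -> x \in o) -> size o <= size Y ->
  exists d, [/\ reach h c d (size o), injective d,
     (forall x, c x \notin legs X Y -> d x = c x) &
     (forall x, c x \in legs X Y -> d x \in Y)].
Proof.
move=> hs HX HY Hu Hc Ho HoY.
have Hu' : uniq (legs X Y) by rewrite uniq_legs.
have [d [R I U M]] := compress_to_end (sorted_legs hs HX HY) Hu' Hc.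
have Hcard : #|[set x | c x \in legs X Y]| <= size o.
  apply: leq_trans (card_size o); rewrite -cardsE.
  by apply/subset_leq_card/subsetP => x; rewrite !inE; apply: Ho.
exists d; split => //; first exact: reach_mono R.
by move=> x /M; apply: drop_legs; apply: leq_trans HoY.
Qed.

End Legs.

Definition spider (V : eqType) (h : rel V) (w : V) (A B C : seq V) :=
  [&& uniq (w :: A ++ B ++ C), path h w A, path h w B, path h w C & C != [::]].

Definition agree_off (Rob : eqType) (V : Type) (o : seq Rob) (c d : Rob -> V) :=
  forall x, x \notin o -> d x = c x.

Lemma agree_off_upd (Rob V : eqType) (o : seq Rob) (c d : Rob -> V) r y :
  r \in o -> agree_off o c d -> agree_off o c (upd d r y).
Proof. by move=> Hr Hd x Hx; rewrite /upd ifN ?Hd //; apply: contraNneq Hx => ->. Qed.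

Section Spider.
Variables (Rob : finType) (V : eqType) (h : rel V) (w : V) (A B C : seq V).
Variables (o : seq Rob) (c : Rob -> V).
Hypotheses (hs : symmetric h) (Hsp : spider h w A B C).
Hypothesis Hocc : forall x, (c x \in w :: A ++ B ++ C) = (x \in o).
Hypotheses (HoA : size o <= size A) (HoB : size o <= size B).

Local Notation spv := (w :: A ++ B ++ C).

Let uABC : uniq spv. Proof. by case/and5P: Hsp. Qed.
Let pA : path h w A. Proof. by case/and5P: Hsp. Qed.
Let pB : path h w B. Proof. by case/and5P: Hsp. Qed.
Let pC : path h w C. Proof. by case/and5P: Hsp. Qed.

Let c0 := head w C.
Let c0C : c0 \in C.
Proof. by case/and5P: Hsp => _ _ _ _; rewrite /c0; case: (C) => //= ? ? _; rewrite mem_head. Qed.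
Let wc0 : h w c0.
Proof. by case/and5P: Hsp => _ _ _; rewrite /c0; case: (C) => //= ? ? /andP[]. Qed.

Let wABC : [&& w \notin A, w \notin B & w \notin C].
Proof. by move: uABC; rewrite cons_uniq !mem_cat !negb_or => /andP[]. Qed.
Let uB : uniq B.
Proof. by move: uABC; rewrite cons_uniq !cat_uniq => /and4P[_ _ _ /andP[]]. Qed.
Let BA y : y \in B -> y \notin A.
Proof.
by move: uABC; rewrite cons_uniq cat_uniq => /and4P[_ _ /hasPn H _] Hy; apply: H; rewrite mem_cat Hy.
Qed.
Let CA y : y \in C -> y \notin A.
Proof.
by move: uABC; rewrite cons_uniq cat_uniq => /and4P[_ _ /hasPn H _] Hy; apply: H; rewrite mem_cat Hy orbT.
Qed.
Let CB y : y \in C -> y \notin B.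
Proof.
by move: uABC; rewrite cons_uniq !cat_uniq => /and4P[_ _ _ /and3P[_ /hasPn H _]]; apply: H.
Qed.

Let uAB : uniq (w :: A ++ B).
Proof. by apply: subseq_uniq uABC; rewrite /= eqxx cat_subseq // prefix_subseq. Qed.
Let uBA : uniq (w :: B ++ A).
Proof. by rewrite (perm_uniq (_ : perm_eq _ (w :: A ++ B))) // perm_cons perm_catC. Qed.
Let uBC : uniq (w :: B ++ C).
Proof. by apply: subseq_uniq uABC; rewrite /= eqxx suffix_subseq. Qed.
Let uCB : uniq (w :: C ++ B).
Proof. by rewrite (perm_uniq (_ : perm_eq _ (w :: B ++ C))) // perm_cons perm_catC. Qed.
Let uCA : uniq (w :: C ++ A).
Proof.
have uAC : uniq (w :: A ++ C) by apply: subseq_uniq uABC; rewrite /= eqxx cat_subseq // suffix_subseq.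
by rewrite (perm_uniq (_ : perm_eq _ (w :: A ++ C))) // perm_cons perm_catC.
Qed.

Lemma off_spider x : x \notin o -> c x \notin spv.
Proof. by rewrite Hocc. Qed.

Lemma in_o_of_spider d (Q : seq V) :
  {subset Q <= spv} -> agree_off o c d -> forall x, d x \in Q -> x \in o.
Proof. by move=> HQ Hd x; apply: contraTT => Hx; rewrite Hd //; exact: contra (@HQ _) (off_spider Hx). Qed.

Lemma agree_off_on_spider d d' (Q : seq V) :
  {subset Q <= spv} -> agree_off o c d -> (forall x, d x \notin Q -> d' x = d x) ->
  agree_off o c d'.
Proof.
by move=> HQ Hd Hd' x Hx; rewrite Hd' Hd //; exact: contra (@HQ _) (off_spider Hx).
Qed.

Lemma sub_spider_legs X Y :
  {subset X <= spv} -> {subset Y <= spv} -> {subset legs w X Y <= spv}.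
Proof. by move=> HX HY y; rewrite mem_legs => /or3P[/HX|/eqP->|/HY] //; rewrite mem_head. Qed.

Let sA : {subset A <= spv}. Proof. by move=> y Hy; rewrite inE mem_cat Hy orbT. Qed.
Let sB : {subset B <= spv}. Proof. by move=> y Hy; rewrite inE !mem_cat Hy !orbT. Qed.
Let sC : {subset C <= spv}. Proof. by move=> y Hy; rewrite inE !mem_cat Hy !orbT. Qed.

Lemma gather_on_B : injective c ->
  exists d, [/\ reach h c d (size o + size o), injective d, agree_off o c d &
     forall x, x \in o -> d x \in B].
Proof.
move=> Hc; have sAB := sub_spider_legs sA sB; have sCB := sub_spider_legs sC sB.
have A0 : agree_off o c c by [].
have [d1 [R1 I1 U1 M1]] :=
  compress_onto_leg hs pA pB uAB Hc (in_o_of_spider sAB A0) HoB.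
have A1 := agree_off_on_spider sAB A0 U1.
have [d2 [R2 I2 U2 M2]] := compress_onto_leg hs pC pB uCB I1 (in_o_of_spider sCB A1) HoB.
exists d2; split; [exact: reach_trans R1 R2 | by [] | exact: agree_off_on_spider sCB A1 U2 |].
move=> x Hx; apply: M2; rewrite mem_legs.
case E: (c x \in legs w A B); first by rewrite (M1 _ E) !orbT.
rewrite U1 ?E //; move: Hx E; rewrite -Hocc mem_legs inE !mem_cat.
by case/or4P=> ->; rewrite ?orbT.
Qed.

Lemma clear_B_prefix d r : injective d -> agree_off o c d ->
  (forall x, x \in o -> d x \in B) -> r \in o ->
  exists d', [/\ reach h d d' (size o), injective d', agree_off o c d', d' r = d r &
    forall x, x \in o -> x != r ->
      (d' x \in A) || (d' x \in drop (index (d r) B).+1 B)].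
Proof.
move=> Hd Ad HdB Hr; have HrB := HdB r Hr; set j := index (d r) B.
have HBj : B = take j B ++ d r :: drop j.+1 B by rewrite -{1}(cat_take_drop j B) drop_index.
have uTA : uniq (w :: take j B ++ A).
  by apply: subseq_uniq uBA; rewrite /= eqxx cat_subseq // take_subseq.
have sTA : {subset legs w (take j B) A <= spv}.
  by apply: sub_spider_legs => // y /mem_take /sB.
have [d' [R I U M]] :=
  compress_onto_leg hs (take_path j pB) pA uTA Hd (in_o_of_spider sTA Ad) HoA.
have HdrB y : y \in take j B -> y \notin d r :: drop j.+1 B.
  by move: uB; rewrite {1}HBj cat_uniq => /and3P[_ /hasPn H _] Hy; apply/negP => /H /negP.
exists d'; split => //; first exact: agree_off_on_spider sTA Ad U.
- apply: U; rewrite mem_legs !negb_or; apply/and3P; split.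
  + exact: contraL (HdrB (d r)) (mem_head _ _).
  + by apply: contraTneq HrB => ->; case/and3P: wABC.
  + exact: BA.
move=> x Hx Hxr; case E: (d x \in legs w (take j B) A); first by rewrite M.
rewrite U ?E //; have := HdB x Hx; rewrite {1}HBj mem_cat in_cons.
case/or3P => [HT|/eqP/Hd Exr|->]; last by rewrite orbT.
- by move: E; rewrite mem_legs HT.
- by rewrite Exr eqxx in Hxr.
Qed.

Lemma free_robot_to_C d r : injective d -> agree_off o c d ->
  (forall x, x \in o -> d x \in B) -> r \in o ->
  exists d', [/\ reach h d d' (size o).+1, injective d', agree_off o c d', d' r = c0 &
    forall x, x \in o -> x != r -> (d' x \in A) || (d' x \in B)].
Proof.
move=> Hd Ad HdB Hr; have HrB := HdB r Hr; set j := index (d r) B.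
have [d1 [R1 I1 A1 Hr1 Hpos1]] := clear_B_prefix Hd Ad HdB Hr.
have Htake : take j.+1 B = rcons (take j B) (d r).
  by rewrite (take_nth w) ?index_mem // nth_index.
set p := legs w (take j.+1 B) [:: c0].
have Hp : is_spath h p.
  apply: spath_legs => //; [exact: take_path | by rewrite /= wc0 andbT |].
  by apply: subseq_uniq uBC; rewrite /= eqxx cat_subseq ?take_subseq // sub1seq c0C.
have Hhead : head (d1 r) p = d1 r by rewrite /p /legs Htake rev_rcons Hr1.
have Hlast : last (d1 r) p = c0 by rewrite /p /legs last_cat.
have Hfree x : x != r -> d1 x \notin p.
  move=> Hxr; case: (boolP (x \in o)) => Hx; last first.
    rewrite A1 //; apply: contra (off_spider Hx); apply: sub_spider_legs => // y.
      by move/mem_take; apply: sB.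
    by rewrite inE => /eqP ->; apply: sC.
  have HTD y : y \in drop j.+1 B -> y \notin take j.+1 B.
    by move: uB; rewrite -{1}(cat_take_drop j.+1 B) cat_uniq => /and3P[_ /hasPn H _] /H.
  rewrite mem_legs inE !negb_or; case/orP: (Hpos1 x Hx Hxr) => Hy; apply/and3P; split.
  - by apply: contraL Hy => /mem_take /BA.
  - by apply: contraTneq Hy => ->; case/and3P: wABC.
  - by apply: contraTneq Hy => ->; apply: CA.
  - exact: HTD.
  - by apply: contraTneq (mem_drop Hy) => ->; case/and3P: wABC.
  - by apply: contraTneq (mem_drop Hy) => ->; apply: CB.
have R2 := reach_slide Hp Hhead Hfree; have I2 := injective_slide Hp Hfree I1.
rewrite Hlast in R2 I2; exists (upd d1 r c0); split => //.
- by rewrite -addn1; apply: reach_trans R1 R2.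
- exact: agree_off_upd.
- by rewrite /upd eqxx.
- move=> x Hx Hxr; rewrite /upd (negbTE Hxr).
  by case/orP: (Hpos1 x Hx Hxr) => [->|/mem_drop ->]; rewrite ?orbT.
Qed.

Lemma park_at_end_of_A d r : injective d -> agree_off o c d -> r \in o -> d r = c0 ->
  (forall x, x \in o -> x != r -> (d x \in A) || (d x \in B)) ->
  exists d', [/\ reach h d d' (size o).+1, injective d', agree_off o c d',
    d' r = last w A & forall x, x \in o -> x != r -> d' x \in B].
Proof.
move=> Hd Ad Hr Hdr Hpos; have sAB := sub_spider_legs sA sB.
have [d1 [R1 I1 U1 M1]] := compress_onto_leg hs pA pB uAB Hd (in_o_of_spider sAB Ad) HoB.
have A1 := agree_off_on_spider sAB Ad U1.
have Hr1 : d1 r = c0.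
  rewrite U1 Hdr // mem_legs !negb_or CA // CB // andbT.
  by apply: contraTneq c0C => ->; case/and3P: wABC.
have HB1 x : x \in o -> x != r -> d1 x \in B.
  move=> Hx Hxr; apply: M1; rewrite mem_legs.
  by case/orP: (Hpos x Hx Hxr) => ->; rewrite ?orbT.
set p := legs w [:: c0] A.
have Hp : is_spath h p.
  apply: spath_legs => //; first by rewrite /= wc0.
  by apply: subseq_uniq uCA; rewrite /= eqxx -cat1s cat_subseq // sub1seq c0C.
have Hhead : head (d1 r) p = d1 r by rewrite Hr1.
have Hfree x : x != r -> d1 x \notin p.
  move=> Hxr; case: (boolP (x \in o)) => Hx; last first.
    rewrite A1 //; apply: contra (off_spider Hx); apply: sub_spider_legs => // y.
    by rewrite inE => /eqP ->; apply: sC.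
  have Hy := HB1 x Hx Hxr.
  rewrite mem_legs inE !negb_or BA // andbT; apply/andP; split.
  - by apply: contraTneq Hy => ->; apply: CB.
  - by apply: contraTneq Hy => ->; case/and3P: wABC.
have R2 := reach_slide Hp Hhead Hfree; have I2 := injective_slide Hp Hfree I1.
exists (upd d1 r (last w A)); split => //.
- by rewrite -addn1; apply: reach_trans R1 R2.
- exact: agree_off_upd.
- by rewrite /upd eqxx.
- by move=> x Hx Hxr; rewrite /upd (negbTE Hxr); apply: HB1.
Qed.

Lemma bring_to_end_of_A r : injective c -> r \in o ->
  exists d, [/\ reach h c d (4 * size o + 2), injective d, agree_off o c d,
    d r = last w A & forall x, x \in o -> x != r -> d x \in B].
Proof.
move=> Hc Hr.
have [d1 [R1 I1 A1 B1]] := gather_on_B Hc.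
have [d2 [R2 I2 A2 C2 P2]] := free_robot_to_C I1 A1 B1 Hr.
have [d3 [R3 I3 A3 E3 B3]] := park_at_end_of_A I2 A2 Hr C2 P2.
exists d3; split => //; apply: reach_mono (reach_trans (reach_trans R1 R2) R3).
by move: (size o) => n; clear -n; lia.
Qed.

End Spider.

Lemma spider_rcons (V : eqType) (h : rel V) w A t B C :
  spider h w (rcons A t) B C -> spider h w A B C /\ t \notin w :: A ++ B ++ C.
Proof.
case/and5P=> Hu HA HB HC HC0; move: HA; rewrite rcons_path => /andP[HA _].
have Hperm : perm_eq (w :: rcons A t ++ B ++ C) (t :: w :: A ++ B ++ C).
  by rewrite -cats1 -catA; apply/permPl; exact: (perm_catCA (w :: A) [:: t] (B ++ C)).
by move: Hu; rewrite (perm_uniq Hperm) cons_uniq /spider HA HB HC HC0 => /andP[-> ->].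
Qed.

Definition canon_conf (Rob V : eqType) (w : V) (A : seq V) (o : seq Rob) (c : Rob -> V) :=
  fun x => if x \in o then nth w (rev A) (index x o) else c x.

Lemma reach_canon_conf (Rob : finType) (V : eqType) (h : rel V) w B C (o : seq Rob) :
  forall A (c : Rob -> V), symmetric h -> spider h w A B C -> injective c -> uniq o ->
  (forall x, (c x \in w :: A ++ B ++ C) = (x \in o)) ->
  size o <= size A -> size o <= size B ->
  reach h c (canon_conf w A o c) (size o * (4 * size o + 2)).
Proof.
elim: o => [|r o IH] A c hs Hsp Hc Huo Ho HoA HoB.
  rewrite (_ : canon_conf w A [::] c = c); first exact: reach_refl.
  exact: functional_extensionality.
have Hr : r \in r :: o by rewrite mem_head.
have [d [R1 I1 A1 Hdr HdB]] := bring_to_end_of_A hs Hsp Ho HoA HoB Hc Hr.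
case/lastP: A Hsp Ho HoA Hdr => [|A t] Hsp Ho HoA; first by [].
rewrite last_rcons => Hdr; have [Hsp' Ht] := spider_rcons Hsp.
move: Huo; rewrite cons_uniq => /andP[Hro Huo].
have Ho' x : (d x \in w :: A ++ B ++ C) = (x \in o).
  case: (eqVneq x r) => [->|Hxr]; first by rewrite Hdr (negbTE Ht) (negbTE Hro).
  case: (boolP (x \in o)) => Hx; first by rewrite inE !mem_cat HdB ?inE ?Hx ?orbT.
  have Hx' : x \notin r :: o by rewrite inE negb_or Hxr.
  rewrite A1 //; apply: contraNF Hx' => Hcx; rewrite -Ho.
  by move: Hcx; rewrite !inE !mem_cat mem_rcons inE; case/or4P => ->; rewrite ?orbT.
have HoA' : size o <= size A by rewrite -ltnS -(size_rcons A t).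
have R2 := IH A d hs Hsp' I1 Huo Ho' HoA' (ltnW HoB).
rewrite (_ : canon_conf _ _ _ _ = canon_conf w A o d).
  apply: reach_mono (reach_trans R1 R2) => /=; move: (size o) => n; clear; nia.
apply: functional_extensionality => x; rewrite /canon_conf rev_rcons inE.
case: (eqVneq x r) => [->|Hxr] /=; first by rewrite eqxx (negbTE Hro).
by rewrite eq_sym (negbTE Hxr); case: ifP => // Hx; rewrite A1 // inE negb_or Hxr Hx.
Qed.

Lemma spider_reconfigure (Rob : finType) (V : eqType) (h : rel V) w A B C (o : seq Rob)
    (c c' : Rob -> V) :
  symmetric h -> spider h w A B C -> uniq o -> size o <= size A -> size o <= size B ->
  injective c -> injective c' -> agree_off o c c' ->
  (forall x, (c x \in w :: A ++ B ++ C) = (x \in o)) ->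
  (forall x, (c' x \in w :: A ++ B ++ C) = (x \in o)) ->
  reach h c c' (2 * (size o * (4 * size o + 2))).
Proof.
move=> hs Hsp Huo HoA HoB Hc Hc' Hcc' Ho Ho'.
have R := reach_canon_conf hs Hsp Hc Huo Ho HoA HoB.
have R' := reach_canon_conf hs Hsp Hc' Huo Ho' HoA HoB.
have Ecanon : canon_conf w A o c' = canon_conf w A o c.
  by apply: functional_extensionality => x; rewrite /canon_conf; case: ifPn => // /Hcc'.
by rewrite Ecanon in R'; rewrite mul2n -addnn; apply: reach_trans R (reach_sym hs R').
Qed.

Lemma adj_in_sym (V : eqType) (P : seq V) : symmetric (adj_in P).
Proof. by move=> x y; apply: eq_has => pr; rewrite orbC. Qed.

Lemma hat_edge_sym (V : eqType) (P : seq V) w N : symmetric (hat_edge P w N).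
Proof. by move=> x y; rewrite /hat_edge (adj_in_sym P x y) [X in _ || X]orbC. Qed.

Lemma sorted_adj_in (V : eqType) (s : seq V) : sorted (adj_in s) s.
Proof.
elim: s => //= a [|b t] //= IH; rewrite {1}/adj_in /= eqxx /=.
by apply: sub_path IH => u v; rewrite /adj_in /= => ->; rewrite orbT.
Qed.

Lemma sorted_hat_edge (V : eqType) (P : seq V) w N : sorted (hat_edge P w N) P.
Proof. by apply: sub_sorted (sorted_adj_in P) => u v; rewrite /hat_edge => ->. Qed.

Lemma spider_of_legs (V : eqType) (h : rel V) w x X Y :
  path h w X -> path h w Y -> uniq (w :: X ++ Y) -> h w x -> x != w ->
  x \notin X -> x \notin take 1 Y ->
  exists A B C, [/\ spider h w A B C, size X <= size A, size Y <= (size B).*2,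
     {subset w :: X ++ Y <= w :: A ++ B ++ C} &
     {subset w :: A ++ B ++ C <= x :: w :: X ++ Y}].
Proof.
move=> HX HY Hu Hx Hxw HxX HxY1.
case: (boolP (x \in Y)) => HxY; last first.
  have Hperm : perm_eq (w :: X ++ Y ++ [:: x]) (x :: w :: X ++ Y).
    by rewrite catA cats1 -rcons_cons perm_rcons.
  exists X, Y, [:: x]; split => //.
  - rewrite /spider (perm_uniq Hperm) /= Hx HX HY andbT.
    by rewrite inE negb_or Hxw mem_cat negb_or HxX HxY -cons_uniq Hu.
  - by rewrite -addnn leq_addr.
  - by move=> y Hy; rewrite (perm_mem Hperm) inE Hy orbT.
  - by move=> y; rewrite (perm_mem Hperm).
set j := index x Y.
have Hj0 : 0 < j.
  rewrite lt0n; apply: contraNneq HxY1 => Ej.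
  by rewrite -(nth_index w HxY) -/j Ej; case: (Y) HxY => //= y Y' _; rewrite mem_head.
have HY12 : take j Y ++ drop j Y = Y := cat_take_drop j Y.
have HB1 : path h w (take j Y) := take_path j HY.
have HB2 : path h w (drop j Y).
  move: HY; rewrite -{1}HY12 cat_path drop_index //= => /and3P[_ _ H].
  by rewrite Hx.
have HB1n : take j Y != [::] by rewrite -size_eq0 size_take_min -lt0n leq_min Hj0 lt0n size_eq0; case: (Y) HxY.
have HB2n : drop j Y != [::] by rewrite drop_index.
have Hsize : size Y = size (take j Y) + size (drop j Y) by rewrite -size_cat HY12.
have Hperm : perm_eq (w :: X ++ drop j Y ++ take j Y) (w :: X ++ Y).
  by rewrite perm_cons perm_cat2l perm_catC HY12.
case: (leqP (size (drop j Y)) (size (take j Y))) => Hle.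
  exists X, (take j Y), (drop j Y); rewrite HY12; split => //.
  - by rewrite /spider HY12 Hu HX HB1 HB2 HB2n.
  - by rewrite Hsize -addnn leq_add2l.
  - by move=> y Hy; rewrite inE Hy orbT.
exists X, (drop j Y), (take j Y); split => //.
- by rewrite /spider (perm_uniq Hperm) Hu HX HB1 HB2 HB1n.
- by rewrite Hsize -addnn leq_add2r ltnW.
- by move=> y; rewrite (perm_mem Hperm).
- by move=> y; rewrite (perm_mem Hperm) => Hy; rewrite inE Hy orbT.
Qed.

Lemma legs_of_path (V : eqType) (h : rel V) P w :
  symmetric h -> sorted h P -> w \in P ->
  exists L R, [/\ P = legs w L R, path h w L, path h w R & size L = index w P].
Proof.
move=> hs HP HwP; set m := index w P.
have HPe : P = take m P ++ w :: drop m.+1 P by rewrite -{1}(cat_take_drop m P) drop_index.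
exists (rev (take m P)), (drop m.+1 P); rewrite /legs revK -HPe size_rev size_take index_mem HwP.
move: HP; rewrite {1}HPe sorted_cat_cons => /andP[HT ->]; split=> //.
by move: HT; rewrite -(sorted_rev_sym _ hs) rev_rcons.
Qed.

Lemma exists_notin (T : eqType) (N D : seq T) :
  uniq N -> size D < size N -> exists2 x, x \in N & x \notin D.
Proof.
move=> HuN HD; case: (boolP (all (mem D) N)) => [/allP Hall|/allPn [x Hx HxD]]; last by exists x.
by have := uniq_leq_size HuN Hall; rewrite leqNgt HD.
Qed.

Lemma haven_legs (V : finType) (e h : rel V) q P w :
  symmetric h -> sorted h P -> haven_for e q P w (head w P) ->
  exists L R, [/\ P = legs w L R, path h w L, path h w R, uniq (w :: L ++ R) &
                  (q + 2) %/ 3 <= minn (size L) (size R)].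
Proof.
move=> hs HsP /and5P[Hsp /eqP HsizeP HwP _ /and3P[_ Hlo Hhi]].
have [L [R [HPLR HL HR HsL]]] := legs_of_path hs HsP HwP.
exists L, R; split=> //; first by rewrite -uniq_legs -HPLR; case: (P) Hsp => //= ? ? /andP[].
have Hdist : Pdist P (head w P) w = index w P.
  by rewrite /Pdist; case: (P) HwP => //= y s _; rewrite eqxx sub0n subn0.
have HsR : size R = q - index w P.
  by move: HsizeP; rewrite -HsL HPLR size_cat size_rev /=; lia.
by rewrite HsL HsR; move: Hlo Hhi; rewrite Hdist; clear; lia.
Qed.

Lemma haven_spider (V : finType) (e : rel V) q P w (N : seq V) :
  irreflexive e -> haven_for e q P w (head w P) ->
  uniq N -> 2 < size N -> {in N, forall x, e w x} ->
  exists A B C, [/\ spider (hat_edge P w N) w A B C,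
     (q + 2) %/ 3 <= size A, (q + 2) %/ 3 <= (size B).*2,
     {subset P <= w :: A ++ B ++ C} & {subset w :: A ++ B ++ C <= hat_vert P N}].
Proof.
move=> ei Hhaven HuN HN HeN.
set hh := hat_edge P w N; have hs : symmetric hh := hat_edge_sym P w N.
have [L [R [HPLR HL HR HuLR HsLR]]] := haven_legs hs (sorted_hat_edge P w N) Hhaven.
have HPmem : P =i w :: L ++ R by rewrite HPLR; apply/perm_mem/perm_legs.
have [x HxN HxD] : exists2 x, x \in N & x \notin take 1 L ++ take 1 R.
  apply: exists_notin HuN (leq_ltn_trans _ HN).
  by rewrite size_cat -[2]/(1 + 1) leq_add // size_take_min geq_minl.
have Hwx : hh w x by rewrite /hh /hat_edge eqxx HxN orbT.
have Hxw : x != w by apply: contraTneq (HeN x HxN) => ->; rewrite ei.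
have [X [Y [HXY /and3P[HX HY HuXY] HxXY HsXY]]] : exists X Y,
    [/\ w :: X ++ Y =i w :: L ++ R, [&& path hh w X, path hh w Y & uniq (w :: X ++ Y)],
        x \notin X ++ take 1 Y & (q + 2) %/ 3 <= minn (size X) (size Y)].
  have HRL : perm_eq (w :: R ++ L) (w :: L ++ R) by rewrite perm_cons perm_catC.
  move: HxD; rewrite !mem_cat !negb_or => /andP[HxL1 HxR1].
  case: (boolP (x \in L)) => HxL; last by exists L, R; rewrite mem_cat negb_or HL HR HuLR HxL HxR1.
  exists R, L; rewrite (perm_uniq HRL) mem_cat negb_or HR HL HuLR HxL1 minnC.
  split=> //; first exact: perm_mem HRL.
  rewrite andbT; apply: contraL HxL => HxR.
  by move: HuLR; rewrite cons_uniq cat_uniq => /and4P[_ _ /hasPn /(_ x HxR) ->].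
move: HxXY HsXY; rewrite mem_cat negb_or leq_min => /andP[HxX HxY1] /andP[HsX HsY].
have [A [B [C [Hsp HA HB H1 H2]]]] := spider_of_legs HX HY HuXY Hwx Hxw HxX HxY1.
exists A, B, C; split => //; [exact: leq_trans HsX HA | exact: leq_trans HsY HB | |].
- by move=> y; rewrite HPmem -HXY; apply: H1.
- move=> y /H2; rewrite inE HXY -HPmem => Hy; rewrite unfold_in /hat_vert.
  by case/orP: Hy => [/eqP ->|->]; rewrite ?HxN ?orbT.
Qed.

Lemma occupied_exactly (Rob V : eqType) (c : Rob -> V) (o : seq Rob) (P Q : seq V)
    (H : pred V) :
  {subset P <= Q} -> {subset Q <= H} ->
  (forall x, x \in o -> c x \in P) -> (forall x, x \notin o -> ~~ H (c x)) ->
  forall x, (c x \in Q) = (x \in o).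
Proof.
move=> PQ QH HP HH x; case: (boolP (x \in o)) => Hx; first exact/PQ/HP.
by apply: contraNF (HH x Hx) => /QH.
Qed.

Lemma injective_patch (Rob V : eqType) (S : pred Rob) (c c' : Rob -> V) (H : pred V) :
  injective c -> {in S &, injective c'} ->
  (forall x, S x -> H (c' x)) -> (forall x, ~~ S x -> ~~ H (c x)) ->
  injective (fun x => if S x then c' x else c x).
Proof.
move=> Hc Hc' HS HnS a b; case: (boolP (S a)) => Ha; case: (boolP (S b)) => Hb.
- exact: Hc'.
- by move=> E; move: (HnS b Hb); rewrite -E HS.
- by move=> E; move: (HnS a Ha); rewrite E HS.
- exact: Hc.
Qed.

Lemma reconfiguration_bound s k : s <= k -> 2 * (s * (4 * s + 2)) <= 12 * k ^ 6.
Proof.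
move=> Hs; have Hk6 : k ^ 2 <= k ^ 6 by case: (posnP k) => [->|Hk] //; rewrite leq_pexp2l.
apply: leq_trans (leq_mul (leqnn 12) Hk6); rewrite -mulnn.
have Hss := leq_mul Hs Hs; have Hkk : k <= k * k by case: (k) => // k'; rewrite leq_pmulr.
nia.
Qed.

Theorem mainTheorem9 :
  exists q : nat -> nat,
    (exists a b k0 : nat, 0 < a /\
       forall k, k0 <= k -> k ^ 2 <= a * q k /\ q k <= b * k ^ 2) /\
    exists C : nat,
      forall (V : finType) (e : rel V) (Rob : finType) (pos : Rob -> V)
             (S : {set Rob}) (P : seq V) (w x1 x2 x3 : V) (pos' : Rob -> V),
        symmetric e -> irreflexive e ->
        injective pos ->
        strong_haven e (q #|Rob|) P w ->
        uniq [:: x1; x2; x3] -> e w x1 -> e w x2 -> e w x3 ->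
        (forall r, r \in S -> pos r \in P) ->
        (forall r, r \notin S -> ~~ hat_vert P [:: x1; x2; x3] (pos r)) ->
        {in S &, injective pos'} ->
        (forall r, r \in S -> pos' r \in P) ->
        exists cs : seq (Rob -> V),
          [/\ chain (slide_move (hat_edge P w [:: x1; x2; x3])) pos cs,
              (forall r, last pos cs r = if r \in S then pos' r else pos r) &
              size cs <= C * #|Rob| ^ 6].
Proof.
exists (fun k => 6 * k ^ 2); split; first by exists 1, 6, 0; split=> // k _; rewrite mul1n leq_pmull.
exists 12 => V e Rob pos S P w x1 x2 x3 pos' _ ei Hpos /andP[Hhaven _] HuN Hx1 Hx2 Hx3
  HSP HnS Hinj' HP'.
set N := [:: x1; x2; x3]; set k := #|Rob|; set o := enum S.
have HeN : {in N, forall x, e w x} by move=> x; rewrite !inE => /or3P[] /eqP ->.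
have [A [B [C [Hsp HA HB HPs Hsh]]]] := haven_spider ei Hhaven HuN (erefl : 2 < size N) HeN.
have Hok : size o <= k by rewrite /o -cardE max_card.
have HoAB : size o <= size A /\ size o <= size B by move: HA HB Hok; clear; nia.
set pos2 := fun r => if r \in S then pos' r else pos r.
have Hocc x : (pos x \in w :: A ++ B ++ C) = (x \in o).
  by apply: (occupied_exactly HPs Hsh) => y; rewrite mem_enum; [apply: HSP | apply: HnS].
have Hocc2 x : (pos2 x \in w :: A ++ B ++ C) = (x \in o).
  apply: (occupied_exactly HPs Hsh) => y; rewrite mem_enum /pos2 => Hy.
    by rewrite Hy HP'.
  by rewrite (negbTE Hy) HnS.
have Hinj2 : injective pos2.
  by apply: injective_patch Hpos Hinj' _ HnS => x /HP' Hx; rewrite /hat_vert Hx.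
have Hagree : agree_off o pos pos2 by move=> x; rewrite mem_enum /pos2 => /negbTE ->.
have [cs [Hch Hlast Hsize]] := spider_reconfigure (hat_edge_sym P w N) Hsp (enum_uniq S)
  HoAB.1 HoAB.2 Hpos Hinj2 Hagree Hocc Hocc2.
exists cs; split=> //; first by move=> r; rewrite Hlast.
exact: leq_trans Hsize (reconfiguration_bound Hok).
Qed.
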